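(* Let $N$ be a finite set, $C\subseteq N$ with $|C|\ge 2$ and $k\in\{1,\ldots,|C|-1\}$. Define $\tau\in\mathbb{R}^{\mathcal{S}}$ by $\tau(S)=(-1)^{|S|-k-1}\binom{|S|-2}{|S|-k-1}$ if $S\subseteq C$ and $|S|\ge k+1$, and $\tau(S)=0$ otherwise. Then for every $\eta\in\mathbb{R}^{\Upsilon}$, $$\sum_{S\in\mathcal{S}}\tau(S)\,c_\eta(S)=\sum_{a\in C}\ \sum_{B\subseteq N\setminus\{a\}:\,|B\cap C|\ge k}\eta(a|B),$$ so that the $k$-cluster inequality $\sum_{a\in C}\sum_{B\subseteq N\setminus\{a\}:|B\cap C|\ge k}\eta(a|B)\le|C|-k$ takes, in the characteristic-imset mode, the form $\sum_{S\in\mathcal{S}}\tau(S)c(S)\le |C|-k$.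
   Context: $\Upsilon=\{(a|B): a\in N,\ \emptyset\neq B\subseteq N\setminus\{a\}\}$; $\mathcal{S}=\{S\subseteq N:|S|\ge2\}$; for $\eta\in\mathbb{R}^{\Upsilon}$, $c_\eta\in\mathbb{R}^{\mathcal{S}}$ is defined by $c_\eta(S)=\sum_{a\in S}\sum_{B:\,S\setminus\{a\}\subseteq B\subseteq N\setminus\{a\}}\eta(a|B)$. *)

From HB Require Import structures.
From mathcomp Require Import all_boot all_order all_algebra.
Set Implicit Arguments. Unset Strict Implicit. Unset Printing Implicit Defensive.
Import Order.TTheory GRing.Theory Num.Theory.
Local Open Scope ring_scope.

(* The finite set N is the finType N; subsets are {set N}.
   eta : R^Upsilon is represented as a function eta a B; only its values on
   Upsilon = {(a|B) : a in N, B nonempty, B subset N\{a}} are ever used. *)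

Definition c_eta (N : finType) (R : nmodType) (eta : N -> {set N} -> R)
  (S : {set N}) : R :=
  \sum_(a in S) \sum_(B : {set N} | [&& B != set0, S :\ a \subset B
                                     & B \subset [set~ a]]) eta a B.

Definition tau (N : finType) (R : pzRingType) (C : {set N}) (k : nat)
  (S : {set N}) : R :=
  if (S \subset C) && (k.+1 <= #|S|)%N
  then (-1) ^+ (#|S| - k.+1) * ('C(#|S| - 2, #|S| - k.+1))%:R
  else 0.

From HB Require Import structures.
From mathcomp Require Import all_boot all_order all_algebra.
Import Order.TTheory GRing.Theory Num.Theory.
Local Open Scope ring_scope.

(* Exchanging the sums, the coefficient of eta(a|B) on the left is the sum of
   tau(S) over {a} <= S <= {a} u B.  It vanishes unless a is in C, and then,
   with T = S \ {a} ranging over the subsets of B n C, it equals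
   sum_t binom(m, t) (-1)^(t-k) binom(t-1, t-k) for m = |B n C|.  Pascal's rule
   reduces this alternating sum to the binomial inversion formula
   sum_t binom(m, t) (-1)^(t-K) binom(t, K) = [m = K], and it equals [k <= m]. *)

Section AlternatingBinomialSums.
Variable R : pzRingType.

Lemma sum_bin_pascal (f : nat -> R) m :
  \sum_(t < m.+2) 'C(m.+1, t)%:R * f t =
  \sum_(t < m.+1) 'C(m, t)%:R * f t + \sum_(t < m.+1) 'C(m, t)%:R * f t.+1.
Proof.
rewrite big_ord_recl /=.
under eq_bigr => i _ do rewrite /bump /= binS natrD mulrDl.
rewrite big_split /= addrA; congr (_ + _).
rewrite [in RHS]big_ord_recl /= !bin0; congr (_ + _).
rewrite big_ord_recr /= bin_small // mul0r addr0.
by apply: eq_bigr => i _; rewrite /bump.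
Qed.

Definition signed_bin (K t : nat) : R := (-1) ^+ (t - K) * 'C(t, K)%:R.

Lemma signed_bin0S t : signed_bin 0 t.+1 = - signed_bin 0 t.
Proof. by rewrite /signed_bin !subn0 !bin0 exprS mulN1r !mulNr. Qed.

Lemma signed_binSS K t :
  signed_bin K.+1 t.+1 = signed_bin K t - signed_bin K.+1 t.
Proof.
rewrite /signed_bin subSS binS natrD mulrDr addrC; congr (_ + _).
have [tK | Kt] := leqP t K.
  by rewrite bin_small ?ltnS // !mulr0 oppr0.
by rewrite -subnSK // exprS mulN1r mulNr.
Qed.

Lemma sum_bin_signed_bin m K :
  \sum_(t < m.+1) 'C(m, t)%:R * signed_bin K t = (m == K)%:R.
Proof.
elim: m K => [|m IHm] K.
  by rewrite big_ord1 /signed_bin bin0 bin0n mul1r; case: K => [|K]; rewrite ?mulr1 ?mulr0.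
rewrite sum_bin_pascal IHm; case: K => [|K].
  under eq_bigr => t _ do rewrite signed_bin0S mulrN.
  by rewrite sumrN IHm subrr.
under eq_bigr => t _ do rewrite signed_binSS mulrBr.
by rewrite sumrB !IHm addrC subrK.
Qed.

(* The value of tau on a set of size t.+1, as a function of t. *)
Definition tau_coef (k t : nat) : R :=
  if (k <= t)%N then (-1) ^+ (t - k) * 'C(t.-1, t - k)%:R else 0.

Lemma tau_coefS K t : tau_coef K.+1 t.+1 = signed_bin K t.
Proof.
rewrite /tau_coef /signed_bin ltnS subSS /=.
have [Kt | tK] := leqP K t; first by rewrite bin_sub.
by rewrite bin_small ?mulr0.
Qed.

Lemma sum_bin_tau_coef k m : (0 < k)%N ->
  \sum_(t < m.+1) 'C(m, t)%:R * tau_coef k t = (k <= m)%:R.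
Proof.
case: k => // K _; elim: m => [|m IHm].
  by rewrite big_ord1 /tau_coef mulr0.
rewrite sum_bin_pascal IHm.
under [X in _ + X]eq_bigr => t _ do rewrite tau_coefS.
rewrite sum_bin_signed_bin ltnS.
by case: ltngtP; rewrite ?addr0 ?add0r.
Qed.

Lemma sum_subset_card (T : finType) (D : {set T}) (g : nat -> R) :
  \sum_(X : {set T} | X \subset D) g #|X| =
  \sum_(t < #|D|.+1) 'C(#|D|, t)%:R * g t.
Proof.
rewrite (partition_big (fun X : {set T} => inord #|X| : 'I_#|D|.+1) xpredT) //=.
apply: eq_bigr => t _.
transitivity (\sum_(X in [set X : {set T} | X \subset D & #|X| == t]) g t).
  apply: eq_big => X.
    rewrite inE; case sXD: (X \subset D) => //=.
    by rewrite -val_eqE /= inordK // ltnS subset_leq_card.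
  by move=> /andP [sXD /eqP <-]; rewrite inordK // ltnS subset_leq_card.
by rewrite sumr_const cards_draws mulr_natl.
Qed.

End AlternatingBinomialSums.

Lemma sum_mul_c_eta (N : finType) (R : pzRingType) (w : {set N} -> R)
    (eta : N -> {set N} -> R) :
  \sum_(S : {set N}) w S * c_eta eta S =
  \sum_a \sum_(B : {set N} | (B != set0) && (B \subset [set~ a]))
    (\sum_(S : {set N} | (a \in S) && (S :\ a \subset B)) w S) * eta a B.
Proof.
pose P (a : N) (B S : {set N}) :=
  [&& a \in S, B != set0, S :\ a \subset B & B \subset [set~ a]].
transitivity (\sum_S \sum_a \sum_B (if P a B S then w S * eta a B else 0)).
  apply: eq_bigr => S _; rewrite /c_eta mulr_sumr big_mkcond.
  apply: eq_bigr => a _; rewrite /P; case: (a \in S) => /=; last by rewrite big1.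
  by rewrite mulr_sumr big_mkcond.
rewrite exchange_big; apply: eq_bigr => a _.
rewrite exchange_big [RHS]big_mkcond; apply: eq_bigr => B _ /=.
rewrite /P; case: (B != set0); case: (B \subset _) => /=; last first.
1-3: by rewrite big1 // => S _; rewrite !andbF.
by rewrite mulr_suml [RHS]big_mkcond; apply: eq_bigr => S _; rewrite andbT.
Qed.

Section TauSums.
Variables (N : finType) (R : pzRingType) (C : {set N}) (k : nat).

Lemma tau_small (S : {set N}) : (#|S| <= k)%N -> tau R C k S = 0.
Proof. by move=> leSk; rewrite /tau ltnNge leSk andbF. Qed.

Lemma tau_setU1 (a : N) (T : {set N}) : a \notin T ->
  tau R C k (a |: T) = if (a \in C) && (T \subset C) then tau_coef R k #|T| else 0.
Proof.
move=> aT; rewrite /tau /tau_coef cardsU1 aT add1n subUset sub1set ltnS subSS.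
by rewrite subSS subn1; case: (_ && (T \subset C)).
Qed.

Hypothesis k_gt0 : (0 < k)%N.

Lemma sum_tau_interval (a : N) (B : {set N}) : a \notin B ->
  \sum_(S : {set N} | (a \in S) && (S :\ a \subset B)) tau R C k S =
  ((a \in C) && (k <= #|B :&: C|)%N)%:R.
Proof.
move=> aB; have notin_sub (T : {set N}) : T \subset B -> a \notin T.
  by move=> sTB; apply: contra aB => /(subsetP sTB).
rewrite (reindex_onto (fun T => a |: T) (fun S => S :\ a)); last first.
  by move=> S /andP [aS _]; rewrite setD1K.
transitivity (\sum_(T : {set N} | T \subset B) tau R C k (a |: T)).
  apply: eq_bigl => T; rewrite setU11 /=.
  apply/andP/idP => [[sTB /eqP <-] // | sTB].
  by rewrite setU1K ?notin_sub // sTB eqxx.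
under eq_bigr => T /notin_sub aT do rewrite tau_setU1 //.
case aC: (a \in C) => /=; last by rewrite big1.
rewrite -big_mkcondr.
under eq_bigl => T do rewrite -subsetI.
by rewrite sum_subset_card sum_bin_tau_coef.
Qed.

End TauSums.

Theorem lemma11 (N : finType) (R : realFieldType) (C : {set N}) (k : nat) :
  (2 <= #|C|)%N -> (1 <= k <= #|C| - 1)%N ->
  forall eta : N -> {set N} -> R,
    \sum_(S : {set N} | (2 <= #|S|)%N) tau R C k S * c_eta eta S
    = \sum_(a in C) \sum_(B : {set N} | [&& B != set0, B \subset [set~ a]
                                         & (k <= #|B :&: C|)%N]) eta a B.
Proof.
move=> _ /andP [k_gt0 _] eta.
have -> : \sum_(S : {set N} | (2 <= #|S|)%N) tau R C k S * c_eta eta S =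
          \sum_(S : {set N}) tau R C k S * c_eta eta S.
  rewrite [LHS]big_mkcond; apply: eq_bigr => S _.
  by case: leqP => // smallS; rewrite tau_small ?mul0r // (leq_trans _ k_gt0).
rewrite sum_mul_c_eta [RHS]big_mkcond; apply: eq_bigr => a _.
have notin_sub (B : {set N}) : B \subset [set~ a] -> a \notin B.
  by move=> sBa; apply/negP => /(subsetP sBa); rewrite !inE eqxx.
under eq_bigr => B /andP [_ /notin_sub aB] do rewrite sum_tau_interval //.
case: (a \in C) => /=; last by rewrite big1 // => B _; rewrite mul0r.
rewrite [RHS](eq_bigl _ _ (fun B => andbA _ _ _)) [RHS]big_mkcondr.
by apply: eq_bigr => B _; case: leqP; rewrite ?mul1r ?mul0r.
Qed.
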